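(* Let $\overline{D}$ be FG declarations and $\sigma_m$ a TL method substitution. Suppose $\overline{D}\vdash t<:u\leadsto E_1$, $\overline{D}\approx_k\sigma_m$, and $\models_k t: e\approx E_2$. Then $\models_k u: e\approx E_1\,E_2$.
   Context: Featherweight Go (FG). Field names $f$, method names $m$, variables $x$, structure type names $t_S,u_S$, interface type names $t_I,u_I$; types $t,u$ range over both kinds of names. A method signature is $M = (x_1\,t_1,\ldots,x_n\,t_n)\,t$; a method specification is $m M$. Expressions: $e ::= x \mid e.m(e_1,\ldots,e_n) \mid t_S\{e_1,\ldots,e_n\} \mid e.f \mid e.(t)$. Declarations: $\mathtt{type}\ t_S\ \mathtt{struct}\{f_1\,t_1 \ldots f_n\,t_n\}$, $\mathtt{type}\ t_I\ \mathtt{interface}\{S_1 \ldots S_q\}$ ($S_j$ method specifications, in this order), and method declarations $\mathtt{func}\ (x\ t_S)\ m M\ \{\mathtt{return}\ e\}$. It is assumed that structures are non-recursive, field names within a struct are distinct, method names within an interface are distinct, and each method declaration is uniquely identified by receiver type and method name. $\mathrm{methods}(\overline{D},t_S)=\{mM \mid \mathtt{func}\ (x\ t_S)\ mM\{\ldots\}\in\overline{D}\}$; $\mathrm{methods}(\overline{D},t_I)$ is the set of specifications of the declaration of $t_I$. Subtyping: $t_S <: t_S$, and $t <: u_I$ iff $\mathrm{methods}(\overline{D},t)\supseteq\mathrm{methods}(\overline{D},u_I)$. $\mathrm{methodLookup}(\overline{D},(m,t_S))$ is the unique declaration $\mathtt{func}\ (x\ t_S)\ mM\{\ldots\}\in\overline{D}$.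 FG values $v ::= t_S\{v_1,\ldots,v_n\}$. Reduction $\overline{D}\vdash d\longrightarrow e$ is closed under evaluation contexts $\mathcal{E} ::= [\,] \mid t_S\{\overline{v},\mathcal{E},\overline{e}\} \mid \mathcal{E}.f \mid \mathcal{E}.(t) \mid \mathcal{E}.m(\overline{e}) \mid v.m(\overline{v},\mathcal{E},\overline{e})$, with rules $t_S\{v_1..v_n\}.f_i \longrightarrow v_i$; $v.m(v_1..v_n)\longrightarrow [x\mapsto v, x_i\mapsto v_i]e$ if $v=t_S\{\ldots\}$ and $\mathtt{func}\ (x\ t_S)\ m(x_1\,t_1..x_n\,t_n)\,t\{\mathtt{return}\ e\}\in\overline{D}$; $v.(t)\longrightarrow v$ if $v=t_S\{\ldots\}$ and $t_S<:t$. $\overline{D}\vdash e\longrightarrow^{\le k} v$ means $e$ reduces to value $v$ in at most $k$ steps. Target language (TL): $E ::= X \mid K \mid E\,E \mid \lambda X.E \mid \mathtt{case}\ E\ \mathtt{of}\ [Pat_1\to E_1,\ldots]$, $Pat ::= K\,X_1\ldots X_n$, with tuple constructors $(E_1,\ldots,E_n)$. TL values $V ::= X \mid K\,V_1\ldots V_n$. Given a method substitution $\sigma_m$ (finite map from variables $Y$ to $\lambda$-abstractions), reduction $\sigma_m\vdash E\longrightarrow E'$ is closed under contexts $R ::= [\,]\mid K\,\overline{V}\,R\,\overline{E}\mid \mathtt{case}\ R\ \mathtt{of}\ [\ldots]\mid R\,E\mid V\,R$ with rules $(\lambda X.E)\,V\longrightarrow[X\mapsto V]E$; $\mathtt{case}\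 K\,V_1..V_n\ \mathtt{of}\ [\ldots]\longrightarrow[X_i\mapsto V_i]E'$ if $K\,X_1..X_n\to E'$ is a clause; $Y\,E\longrightarrow\sigma_m(Y)\,E$. $\sigma_m\vdash E\longrightarrow^{\le k}V$ analogously. Each struct $t_S$ has a TL constructor $K_{t_S}$, each interface $t_I$ a constructor $K_{t_I}$; the method declaration of $m$ for receiver $t_S$ has a TL variable $m_{t_S}$. Interface-value construction $\overline{D}\vdash t<:u_I\leadsto E$: if $\mathtt{type}\ t_I\ \mathtt{interface}\{m_1M_1..m_nM_n\}\in\overline{D}$ and $\mathrm{methods}(\overline{D},t_S)\supseteq\{m_iM_i\}$ then $\overline{D}\vdash t_S<:t_I\leadsto\lambda X.K_{t_I}(X,m_{1,t_S},\ldots,m_{n,t_S})$; if $\mathtt{type}\ t_I\ \mathtt{interface}\{R_1..R_n\}$, $\mathtt{type}\ u_I\ \mathtt{interface}\{S_1..S_q\}\in\overline{D}$ and $\pi:\{1..q\}\to\{1..n\}$ with $S_i=R_{\pi(i)}$, then $\overline{D}\vdash t_I<:u_I\leadsto\lambda X.\mathtt{case}\ X\ \mathtt{of}\ K_{t_I}(X,X_1,..,X_n)\to K_{u_I}(X,X_{\pi(1)},..,X_{\pi(q)})$. Step-indexed logical relation (relative to fixed $\overline{D}$ and $\sigma_m$), defined by the rules: (Exp) $\models_k t: e\approx E$ holds if for all $k_1<k$, $k_2<k$, FG values $v$ and TL values $V$ with $k-k_1-k_2>0$, $\overline{D}\vdash e\longrightarrow^{\le k_1}v$ and $\sigma_m\vdash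 E\longrightarrow^{\le k_2}V$, we have $\models_{k-k_1-k_2} t: v\approx V$. (Struct) $\models_k t_S: t_S\{v_1..v_n\}\approx K_{t_S}(V_1,..,V_n)$ holds if $\mathtt{type}\ t_S\ \mathtt{struct}\{f_1t_1..f_nt_n\}\in\overline{D}$ and $\models_k t_i: v_i\approx V_i$ for all $i$. (Iface) $\models_k t_I: v\approx K_{t_I}(V,V_1,..,V_n)$ holds if $V=K_{u_S}\,\overline{V'}$ for some struct $u_S$, $\models_{k_1}u_S: v\approx V$ for all $k_1<k$, $\mathrm{methods}(\overline{D},t_I)=\{m_1M_1,..,m_nM_n\}$ (in declaration order), and for all $k_2<k$ and $i$, $\models_{k_2} m_iM_i:\mathrm{methodLookup}(\overline{D},(m_i,u_S))\approx V_i$. (Method) $\models_k m(x_1t_1..x_nt_n)t:\mathtt{func}\ (x\ t_S)\ m(x_1t_1..x_nt_n)t\{\mathtt{return}\ e\}\approx V$ holds if for all $k'\le k$ and $v',V',v_i,V_i$ with $\models_{k'}t_S:v'\approx V'$ and $\models_{k'}t_i:v_i\approx V_i$ for all $i$, we have $\models_{k'}t:[x\mapsto v',x_i\mapsto v_i]e\approx(V\,V')\,(V_1,..,V_n)$. (Decls) $\overline{D}\approx_k\sigma_m$ iff for every $\mathtt{func}\ (x\ t_S)\ mM\{\mathtt{return}\ e\}\in\overline{D}$, $\models_k mM:\mathtt{func}\ (x\ t_S)\ mM\{\mathtt{return}\ e\}\approx m_{t_S}$ (the TL variable). *)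

From Stdlib Require Import List Arith Relations.
Import ListNotations.

Definition fname := nat.
Definition mname := nat.
Definition fvar  := nat.
Definition sname := nat.
Definition iname := nat.

Inductive ty : Type :=
| TS (s : sname)
| TI (i : iname).

Fixpoint assoc {A : Type} (x : nat) (env : list (nat * A)) : option A :=
  match env with
  | [] => None
  | (y, a) :: env' => if Nat.eqb x y then Some a else assoc x env'
  end.

Inductive fexp : Type :=
| FVar (x : fvar)
| FCall (e : fexp) (m : mname) (args : list fexp)
| FStruct (s : sname) (args : list fexp)
| FField (e : fexp) (f : fname)
| FAssert (e : fexp) (t : ty).

Definition signature : Type := (list (fvar * ty) * ty)%type.
Definition mspec : Type := (mname * signature)%type.

Inductive decl : Type :=
| DStruct (s : sname) (fields : list (fname * ty))
| DIface (i : iname) (specs : list mspec)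
    (* type t_I interface { S1 ... Sq } (in this order) *)
| DMeth (x : fvar) (s : sname) (m : mname) (M : signature) (body : fexp).

Definition methods (D : list decl) (t : ty) (sp : mspec) : Prop :=
  match t with
  | TS s => exists x body, In (DMeth x s (fst sp) (snd sp) body) D
  | TI i => exists specs, In (DIface i specs) D /\ In sp specs
  end.

Definition subtype (D : list decl) (t u : ty) : Prop :=
  match u with
  | TS s => t = TS s
  | TI i => forall sp, methods D (TI i) sp -> methods D t sp
  end.

Definition mlookup (D : list decl) (m : mname) (s : sname) (d : decl) : Prop :=
  In d D /\ exists x M body, d = DMeth x s m M body.

Definition struct_field_rel (D : list decl) (s' s : sname) : Prop :=
  exists fds f, In (DStruct s fds) D /\ In (f, TS s') fds.

Definition wf_decls (D : list decl) : Prop :=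
  (forall s f1 f2, In (DStruct s f1) D -> In (DStruct s f2) D -> f1 = f2) /\
  (forall i p1 p2, In (DIface i p1) D -> In (DIface i p2) D -> p1 = p2) /\
  (forall s, ~ clos_trans sname (struct_field_rel D) s s) /\
  (forall s fds, In (DStruct s fds) D -> NoDup (map fst fds)) /\
  (forall i specs, In (DIface i specs) D -> NoDup (map fst specs)) /\
  (forall x1 x2 s m M1 M2 b1 b2,
      In (DMeth x1 s m M1 b1) D -> In (DMeth x2 s m M2 b2) D ->
      x1 = x2 /\ M1 = M2 /\ b1 = b2).

Inductive fval : fexp -> Prop :=
| fval_struct s vs : Forall fval vs -> fval (FStruct s vs).

Fixpoint fsubst (env : list (fvar * fexp)) (e : fexp) : fexp :=
  match e with
  | FVar x => match assoc x env with Some v => v | None => FVar x end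
  | FCall e0 m args => FCall (fsubst env e0) m (map (fsubst env) args)
  | FStruct s args => FStruct s (map (fsubst env) args)
  | FField e0 f => FField (fsubst env e0) f
  | FAssert e0 t => FAssert (fsubst env e0) t
  end.

Inductive fstep (D : list decl) : fexp -> fexp -> Prop :=
| fs_field s fds vs i f t v :
    In (DStruct s fds) D -> Forall fval vs -> length vs = length fds ->
    nth_error fds i = Some (f, t) -> nth_error vs i = Some v ->
    fstep D (FField (FStruct s vs) f) v
| fs_call s ws x m ps tr body vs :
    Forall fval ws -> In (DMeth x s m (ps, tr) body) D ->
    Forall fval vs -> length vs = length ps ->
    fstep D (FCall (FStruct s ws) m vs)
          (fsubst ((x, FStruct s ws) :: combine (map fst ps) vs) body)
| fs_assert s ws t :
    Forall fval ws -> subtype D (TS s) t ->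
    fstep D (FAssert (FStruct s ws) t) (FStruct s ws)
| fs_ctx_struct s vs e e' es :
    Forall fval vs -> fstep D e e' ->
    fstep D (FStruct s (vs ++ e :: es)) (FStruct s (vs ++ e' :: es))
| fs_ctx_field e e' f :
    fstep D e e' -> fstep D (FField e f) (FField e' f)
| fs_ctx_assert e e' t :
    fstep D e e' -> fstep D (FAssert e t) (FAssert e' t)
| fs_ctx_recv e e' m es :
    fstep D e e' -> fstep D (FCall e m es) (FCall e' m es)
| fs_ctx_arg v m vs e e' es :
    fval v -> Forall fval vs -> fstep D e e' ->
    fstep D (FCall v m (vs ++ e :: es)) (FCall v m (vs ++ e' :: es)).

Fixpoint fsteps (D : list decl) (n : nat) (e e' : fexp) : Prop :=
  match n with
  | 0 => e = e'
  | S n' => exists e'', fstep D e e'' /\ fsteps D n' e'' e'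
  end.

Definition fsteps_le (D : list decl) (k : nat) (e v : fexp) : Prop :=
  fval v /\ exists n, n <= k /\ fsteps D n e v.

Inductive tcon : Type :=
| KS (s : sname)
| KI (i : iname)
| KTup (n : nat).

Inductive tvar : Type :=
| TV (x : nat)
| TM (m : mname) (s : sname). (* method variable m_{t_S} *)

Inductive texp : Type :=
| TVar (v : tvar)
| TCon (K : tcon)
| TApp (E1 E2 : texp)
| TLam (x : nat) (E : texp)
| TCase (E : texp) (cls : list (tcon * list nat * texp)).

Definition conapp (K : tcon) (Es : list texp) : texp :=
  fold_left TApp Es (TCon K).

Inductive tcval : texp -> Prop :=
| tcv_con K : tcval (TCon K)
| tcv_app E1 E2 : tcval E1 -> tval E2 -> tcval (TApp E1 E2)
with tval : texp -> Prop :=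
| tv_var v : tval (TVar v)
| tv_c E : tcval E -> tval E.

Definition remove_all (xs : list nat) {A : Type} (env : list (nat * A))
  : list (nat * A) :=
  filter (fun p => negb (existsb (Nat.eqb (fst p)) xs)) env.

Fixpoint tsubst (env : list (nat * texp)) (E : texp) : texp :=
  match E with
  | TVar (TV x) => match assoc x env with Some V => V | None => E end
  | TVar (TM _ _) => E
  | TCon _ => E
  | TApp E1 E2 => TApp (tsubst env E1) (tsubst env E2)
  | TLam x B => TLam x (tsubst (remove_all [x] env) B)
  | TCase Sc cls =>
      TCase (tsubst env Sc)
        (map (fun c => match c with (K, xs, B) =>
                 (K, xs, tsubst (remove_all xs env) B) end) cls)
  end.

(* method substitution sigma_m: finite map from variables Y to
   lambda-abstractions; sigma Y = Some (X, E) means sigma_m(Y) = \X.E *)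
Definition msubst : Type := tvar -> option (nat * texp).

Inductive tstep (sigma : msubst) : texp -> texp -> Prop :=
| ts_beta x E V : tval V -> tstep sigma (TApp (TLam x E) V) (tsubst [(x, V)] E)
| ts_case K Vs cls xs E' :
    Forall tval Vs -> In (K, xs, E') cls -> length xs = length Vs ->
    tstep sigma (TCase (conapp K Vs) cls) (tsubst (combine xs Vs) E')
| ts_meth Y x B E :
    sigma Y = Some (x, B) -> tstep sigma (TApp (TVar Y) E) (TApp (TLam x B) E)
| ts_ctx_con K Vs E E' Es :
    Forall tval Vs -> tstep sigma E E' ->
    tstep sigma (conapp K (Vs ++ E :: Es)) (conapp K (Vs ++ E' :: Es))
| ts_ctx_case E E' cls :
    tstep sigma E E' -> tstep sigma (TCase E cls) (TCase E' cls)
| ts_ctx_appl E1 E1' E2 :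
    tstep sigma E1 E1' -> tstep sigma (TApp E1 E2) (TApp E1' E2)
| ts_ctx_appr V E2 E2' :
    tval V -> tstep sigma E2 E2' -> tstep sigma (TApp V E2) (TApp V E2').

Fixpoint tsteps (sigma : msubst) (n : nat) (E E' : texp) : Prop :=
  match n with
  | 0 => E = E'
  | S n' => exists E'', tstep sigma E E'' /\ tsteps sigma n' E'' E'
  end.

Definition tsteps_le (sigma : msubst) (k : nat) (E V : texp) : Prop :=
  tval V /\ exists n, n <= k /\ tsteps sigma n E V.

Inductive coerce (D : list decl) : ty -> ty -> texp -> Prop :=
| co_struct s i specs X :
    In (DIface i specs) D ->
    (forall sp, In sp specs -> methods D (TS s) sp) ->
    coerce D (TS s) (TI i)
      (TLam X (conapp (KI i)
                 (TVar (TV X) :: map (fun sp => TVar (TM (fst sp) s)) specs)))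
| co_iface ti ui R S (pi : list nat) X (Xs : list nat) :
    In (DIface ti R) D -> In (DIface ui S) D ->
    (* pi : {1..q} -> {1..n} with S_j = R_{pi(j)} (0-based lists) *)
    length pi = length S ->
    (forall j a, nth_error pi j = Some a -> a < length R) ->
    (forall j a sp, nth_error pi j = Some a -> nth_error S j = Some sp ->
                    nth_error R a = Some sp) ->
    length Xs = length R -> NoDup (X :: Xs) ->
    coerce D (TI ti) (TI ui)
      (TLam X (TCase (TVar (TV X))
         [(KI ti, X :: Xs,
           conapp (KI ui)
             (TVar (TV X) :: map (fun a => TVar (TV (nth a Xs 0))) pi))])).

Section LR.
Variable D : list decl.
Variable sigma : msubst.

Definition rel_family : Type := nat -> ty -> fexp -> texp -> Prop.

Definition exprel (VR : rel_family) (k : nat) (t : ty) (e : fexp) (E : texp)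
  : Prop :=
  forall k1 k2 v V,
    k1 < k -> k2 < k -> k - k1 - k2 > 0 ->
    fsteps_le D k1 e v -> tsteps_le sigma k2 E V ->
    VR (k - k1 - k2) t v V.

Definition methrel (VR : rel_family) (k : nat) (sp : mspec) (d : decl)
  (V : texp) : Prop :=
  match d with
  | DMeth x s m (ps, tr) body =>
      sp = (m, (ps, tr)) /\
      forall k' v' V' vs Vs,
        k' <= k ->
        fval v' -> tval V' -> Forall fval vs -> Forall tval Vs ->
        length vs = length ps -> length Vs = length ps ->
        VR k' (TS s) v' V' ->
        (forall j p vj Vj, nth_error ps j = Some p -> nth_error vs j = Some vj ->
                           nth_error Vs j = Some Vj -> VR k' (snd p) vj Vj) ->
        exprel VR k' tr (fsubst ((x, v') :: combine (map fst ps) vs) body)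
               (TApp (TApp V V') (conapp (KTup (length ps)) Vs))
  | _ => False
  end.

(* value relation at index k, given the relation [prev] at indices < k:
   rules (Struct) and (Iface) *)
Inductive vstep (prev : rel_family) (k : nat) : ty -> fexp -> texp -> Prop :=
| vs_struct s fds vs Vs :
    In (DStruct s fds) D ->
    length vs = length fds -> length Vs = length fds ->
    Forall fval vs -> Forall tval Vs ->
    (forall j f t v V, nth_error fds j = Some (f, t) -> nth_error vs j = Some v ->
                       nth_error Vs j = Some V -> vstep prev k t v V) ->
    vstep prev k (TS s) (FStruct s vs) (conapp (KS s) Vs)
| vs_iface i v us Vus Vms specs :
    fval v -> Forall tval Vus -> Forall tval Vms ->
    In (DIface i specs) D -> length Vms = length specs ->
    (forall k1, k1 < k -> prev k1 (TS us) v (conapp (KS us) Vus)) ->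
    (forall k2 j sp Vj, k2 < k -> nth_error specs j = Some sp ->
        nth_error Vms j = Some Vj ->
        exists d, mlookup D (fst sp) us d /\ methrel prev k2 sp d Vj) ->
    vstep prev k (TI i) v (conapp (KI i) (conapp (KS us) Vus :: Vms)).

(* vrel_upto n j = value relation at index j, for j <= n *)
Fixpoint vrel_upto (n : nat) : rel_family :=
  match n with
  | 0 => vstep (fun _ _ _ _ => False)
  | S n' => vstep (vrel_upto n')
  end.

Definition vrel : rel_family := fun k => vrel_upto k k.

Definition erel (k : nat) (t : ty) (e : fexp) (E : texp) : Prop :=
  exprel vrel k t e E.

Definition mrel (k : nat) (sp : mspec) (d : decl) (V : texp) : Prop :=
  methrel vrel k sp d V.

Definition decls_rel (k : nat) : Prop :=
  forall x s m M body, In (DMeth x s m M body) D ->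
    mrel k (m, M) (DMeth x s m M body) (TVar (TM m s)).

End LR.

From Stdlib Require Import List Arith Lia.
Import ListNotations.

(* The coercion E1 is a lambda, so E1 E2 reduces only once E2 is a value; the
   (Exp) hypothesis, used with no target-language steps, then relates the FG
   value v to E2 at type t.  For a struct source, E1 E2 reduces in one step to
   the interface value K_{u_I}(E2, m_{1,t_S}, ..., m_{q,t_S}), whose method
   components are related by D ~_k sigma_m.  For an interface source, E2 is
   K_{t_I}(V, V_1, ..., V_n) and E1 E2 reduces in two steps to
   K_{u_I}(V, V_{pi(1)}, ..., V_{pi(q)}), whose components were already related
   at t_I.  The relation is downward closed in the step index, which absorbs the
   steps spent on both sides. *)

Section TargetLanguage.
Variable sigma : msubst.

Lemma conapp_snoc K Es E : conapp K (Es ++ [E]) = TApp (conapp K Es) E.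
Proof. unfold conapp. now rewrite fold_left_app. Qed.

Lemma conapp_app_inv K Es E1 E2 :
  conapp K Es = TApp E1 E2 -> exists Es', Es = Es' ++ [E2] /\ E1 = conapp K Es'.
Proof.
  induction Es as [|E Es _] using rev_ind; [discriminate|].
  rewrite conapp_snoc. intros [= <- <-]. eauto.
Qed.

Lemma conapp_nonnil_app K Vs E Es : exists E1 E2, conapp K (Vs ++ E :: Es) = TApp E1 E2.
Proof.
  destruct (exists_last (l := Vs ++ E :: Es)) as [Es' [E' ->]].
  - now destruct Vs.
  - rewrite conapp_snoc. eauto.
Qed.

Lemma conapp_not_lam K Es x B : conapp K Es <> TLam x B.
Proof. induction Es as [|E Es _] using rev_ind; [|rewrite conapp_snoc]; discriminate. Qed.

Lemma conapp_inj K K' Es Es' : conapp K Es = conapp K' Es' -> K = K' /\ Es = Es'.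
Proof.
  revert Es'. induction Es as [|E Es IH] using rev_ind; intros Es'.
  - induction Es' as [|E' Es' _] using rev_ind; [now intros [= ->]|].
    rewrite conapp_snoc. discriminate.
  - rewrite conapp_snoc. intros H. apply eq_sym, conapp_app_inv in H as [Es'' [-> H]].
    apply IH in H as [-> ->]. auto.
Qed.

Lemma conapp_tval K Es : Forall tval Es -> tval (conapp K Es).
Proof.
  intros HEs. apply tv_c. induction Es as [|E Es IH] using rev_ind; [constructor|].
  apply Forall_app in HEs as [HEs HE]. inversion HE.
  rewrite conapp_snoc. constructor; auto.
Qed.

Lemma tval_not_app_lam x B E : ~ tval (TApp (TLam x B) E).
Proof.
  intros HV. inversion HV as [|? Hc]. inversion Hc as [|? ? Hl]. inversion Hl.
Qed.

Lemma tval_not_case Sc cls : ~ tval (TCase Sc cls).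
Proof. intros HV. inversion HV as [|? Hc]. inversion Hc. Qed.

Lemma tvar_irreducible y E' : ~ tstep sigma (TVar y) E'.
Proof.
  intros Hs. inversion Hs.
  destruct (conapp_nonnil_app K Vs E Es) as [E1 [E2 HE]]. congruence.
Qed.

Lemma tcval_irreducible E E' : tcval E -> ~ tstep sigma E E'.
Proof.
  revert E'. induction E as [y|K|E1 IH1 E2 IH2|x B _|Sc _ cls]; intros E' Hv Hs;
    inversion Hv; subst.
  - inversion Hs; subst.
    destruct (conapp_nonnil_app K0 Vs E Es) as [E1 [E2 HE]]. congruence.
  - assert (HE2 : forall E2', ~ tstep sigma E2 E2').
    { intros E2' Hs2. inversion H2; subst; [eapply tvar_irreducible|eapply IH2]; eauto. }
    inversion Hs; subst.
    + inversion H1.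
    + inversion H1.
    + destruct Es as [|E3 Es _] using rev_ind.
      * rewrite conapp_snoc in H. injection H as <- <-. eapply HE2; eauto.
      * rewrite app_comm_cons, app_assoc, conapp_snoc in H. injection H as <- <-.
        eapply IH1; [eassumption|apply ts_ctx_con; eassumption].
    + eapply IH1; eauto.
    + eapply HE2; eauto.
Qed.

Lemma tval_irreducible V E' : tval V -> ~ tstep sigma V E'.
Proof.
  intros []; [apply tvar_irreducible|]. now apply tcval_irreducible.
Qed.

Lemma tsteps_le_tval k W V : tval W -> tsteps_le sigma k W V -> V = W.
Proof.
  intros HW [_ [[|n] [_ Hs]]]; [easy|].
  destruct Hs as [W' [Hs _]]. now apply tval_irreducible in Hs.
Qed.

Lemma tstep_beta_inv x B E W :
  tstep sigma (TApp (TLam x B) E) W -> tval E /\ W = tsubst [(x, E)] B.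
Proof.
  intros Hs. inversion Hs; subst; auto.
  - apply conapp_app_inv in H as [Es' [_ HK]]. now apply eq_sym, conapp_not_lam in HK.
  - inversion H2. destruct (conapp_nonnil_app K Vs E0 Es) as [E1 [E2 HE]]. congruence.
  - inversion H1. inversion H.
Qed.

Lemma tstep_case_inv Sc cls W : tval Sc -> tstep sigma (TCase Sc cls) W ->
  exists K Vs xs B, Sc = conapp K Vs /\ Forall tval Vs /\ In (K, xs, B) cls /\
    length xs = length Vs /\ W = tsubst (combine xs Vs) B.
Proof.
  intros HSc Hs. inversion Hs; subst.
  - repeat eexists; eauto.
  - destruct (conapp_nonnil_app K Vs E Es) as [E1 [E2 HE]]. congruence.
  - now apply tval_irreducible in H2.
Qed.

Lemma tsteps_le_beta_inv k x B E V :
  tsteps_le sigma k (TApp (TLam x B) E) V ->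
  tval E /\ tsteps_le sigma k (tsubst [(x, E)] B) V.
Proof.
  intros [HV [[|n] [Hn Hs]]].
  - simpl in Hs. subst. now apply tval_not_app_lam in HV.
  - destruct Hs as [W [Hs Hs']]. apply tstep_beta_inv in Hs as [HE ->].
    split; [|split; [|exists n; split]]; auto with arith.
Qed.

Lemma tsteps_le_case_inv k Sc cls V : tval Sc ->
  tsteps_le sigma k (TCase Sc cls) V ->
  exists K Vs xs B, Sc = conapp K Vs /\ Forall tval Vs /\ In (K, xs, B) cls /\
    length xs = length Vs /\ tsteps_le sigma k (tsubst (combine xs Vs) B) V.
Proof.
  intros HSc [HV [[|n] [Hn Hs]]].
  - simpl in Hs. subst. now apply tval_not_case in HV.
  - destruct Hs as [W [Hs Hs']].
    apply tstep_case_inv in Hs as (K & Vs & xs & B & -> & HVs & Hcl & Hlen & ->); auto.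
    exists K, Vs, xs, B. repeat split; auto. exists n. auto with arith.
Qed.

End TargetLanguage.

Lemma tsubst_conapp env K Es : tsubst env (conapp K Es) = conapp K (map (tsubst env) Es).
Proof.
  unfold conapp. change (TCon K) with (tsubst env (TCon K)) at 2.
  generalize (TCon K). induction Es; simpl; auto.
Qed.

Fixpoint tsubst_nil E : tsubst [] E = E.
Proof.
  destruct E as [[x|m s]|K|E1 E2|x B|Sc cls]; simpl; f_equal; auto.
  induction cls as [|[[K xs] B] cls IH]; simpl; f_equal; auto.
  now rewrite tsubst_nil.
Qed.

Lemma assoc_combine_nth (xs : list nat) (Vs : list texp) a :
  NoDup xs -> length xs = length Vs -> a < length xs ->
  assoc (nth a xs 0) (combine xs Vs) = nth_error Vs a.
Proof.
  revert Vs a. induction xs as [|x xs IH]; intros [|V Vs] a Hnd Hl Ha;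
    simpl in *; try lia.
  inversion Hnd as [|? ? Hx Hnd']; subst.
  destruct a as [|a]; simpl; [now rewrite Nat.eqb_refl|].
  destruct (Nat.eqb_spec (nth a xs 0) x) as [Ha'|].
  - exfalso. apply Hx. rewrite <- Ha'. apply nth_In. lia.
  - apply IH; auto; lia.
Qed.

Lemma tsubst_pattern_var X Xs W Ws a d :
  NoDup (X :: Xs) -> length Xs = length Ws -> a < length Xs ->
  tsubst (combine (X :: Xs) (W :: Ws)) (TVar (TV (nth a Xs 0))) = nth a Ws d.
Proof.
  intros Hnd Hl Ha.
  assert (Hassoc := assoc_combine_nth (X :: Xs) (W :: Ws) (S a) Hnd).
  simpl in Hassoc |- *. rewrite Hassoc by lia.
  now rewrite (nth_error_nth' Ws d) by lia.
Qed.

Section LogicalRelation.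
Variable D : list decl.
Variable sigma : msubst.

Definition vrel_below (n : nat) : rel_family :=
  match n with 0 => fun _ _ _ _ => False | S n' => vrel_upto D sigma n' end.

Definition rel_agree_below (P Q : rel_family) (n : nat) : Prop :=
  forall i, i < n -> forall t v V, P i t v V <-> Q i t v V.

Lemma vrel_upto_unfold n : vrel_upto D sigma n = vstep D sigma (vrel_below n).
Proof. now destruct n. Qed.

Lemma methrel_agree P Q k sp d V :
  rel_agree_below P Q (S k) -> methrel D sigma P k sp d V -> methrel D sigma Q k sp d V.
Proof.
  intros Hag. destruct d as [| |x s m [ps tr] body]; simpl; try tauto.
  intros [Hsp Hbody]. split; auto.
  intros k' v' V' vs Vs Hk Hv' HV' Hvs HVs Hlvs HlVs Hrecv Hargs k1 k2 v V0 Hk1 Hk2 Hk12 Hv HV.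
  apply Hag; [lia|].
  eapply (Hbody k' v' V' vs Vs); eauto.
  - apply Hag; [lia|auto].
  - intros j p vj Vj Hp Hvj HVj. apply Hag; [lia|]. eauto.
Qed.

Lemma methrel_mono P k k' sp d V :
  k' <= k -> methrel D sigma P k sp d V -> methrel D sigma P k' sp d V.
Proof.
  intros Hk. destruct d as [| |x s m [ps tr] body]; simpl; try tauto.
  intros [Hsp Hbody]. split; auto. intros; eapply Hbody; eauto; lia.
Qed.

Lemma vstep_mono P Q j j' t v V :
  vstep D sigma P j t v V -> j' <= j -> rel_agree_below P Q j' -> vstep D sigma Q j' t v V.
Proof.
  induction 1 as [s fds vs Vs Hin Hlvs HlVs Hvs HVs Hfields IH
                 |i v us Vus Vms specs Hv HVus HVms Hin Hl Hrecv Hmeths];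
    intros Hj Hag.
  - eapply vs_struct; eauto.
  - eapply vs_iface; eauto.
    + intros k1 Hk1. apply Hag; auto. apply Hrecv; lia.
    + intros k2 jj sp Vj Hk2 Hsp HVj.
      destruct (Hmeths k2 jj sp Vj) as [d [Hd Hrel]]; auto; [lia|].
      exists d; split; auto. eapply methrel_agree; eauto.
      intros i' Hi'; apply Hag; lia.
Qed.

Lemma vrel_upto_irrel j n m t v V : j <= n -> j <= m ->
  vrel_upto D sigma n j t v V -> vrel_upto D sigma m j t v V.
Proof.
  revert n m t v V. induction j as [j IH] using lt_wf_ind. intros n m t v V Hn Hm H.
  rewrite vrel_upto_unfold in H |- *. eapply vstep_mono; eauto.
  intros i Hi t' v' V'. destruct n as [|n]; [lia|]. destruct m as [|m]; [lia|].
  split; apply IH; auto; lia.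
Qed.

Lemma vrel_below_agree n : rel_agree_below (vrel_below n) (vrel D sigma) n.
Proof.
  intros i Hi t v V. destruct n as [|n]; [lia|].
  split; apply vrel_upto_irrel; lia.
Qed.

Lemma vrel_unfold j t v V : vrel D sigma j t v V -> vstep D sigma (vrel D sigma) j t v V.
Proof.
  unfold vrel at 1. rewrite vrel_upto_unfold. intros H.
  eapply vstep_mono; eauto. apply vrel_below_agree.
Qed.

Lemma vrel_fold j t v V : vstep D sigma (vrel D sigma) j t v V -> vrel D sigma j t v V.
Proof.
  unfold vrel at 2. rewrite vrel_upto_unfold. intros H.
  eapply vstep_mono; eauto. intros i Hi t' v' V'. symmetry. now apply vrel_below_agree.
Qed.

Lemma vrel_mono j j' t v V : j' <= j -> vrel D sigma j t v V -> vrel D sigma j' t v V.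
Proof.
  intros Hj H. apply vrel_fold. eapply vstep_mono; [apply vrel_unfold; eauto|auto|].
  intros i _; tauto.
Qed.

Lemma erel_tval k t e E k1 v :
  erel D sigma k t e E -> tval E -> k1 < k -> fsteps_le D k1 e v ->
  vrel D sigma (k - k1) t v E.
Proof.
  intros He HE Hk1 Hv. replace (k - k1) with (k - k1 - 0) by lia.
  apply He; auto; try lia. split; auto. now exists 0.
Qed.

Lemma vrel_struct_iface k j s i specs v W :
  In (DIface i specs) D -> (forall sp, In sp specs -> methods D (TS s) sp) ->
  decls_rel D sigma k -> j <= k ->
  vrel D sigma j (TS s) v W ->
  vrel D sigma j (TI i) v (conapp (KI i) (W :: map (fun sp => TVar (TM (fst sp) s)) specs)).
Proof.
  intros Hi Hspecs Hdecls Hj HW.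
  pose proof (vrel_unfold _ _ _ _ HW) as HW'. inversion HW'; subst.
  apply vrel_fold. eapply vs_iface; eauto.
  - now constructor.
  - apply Forall_map, Forall_forall. constructor.
  - now rewrite length_map.
  - intros j1 Hj1. apply vrel_mono with (j := j); [lia|exact HW].
  - intros j2 n sp Vn Hj2 Hsp HVn. rewrite (map_nth_error _ _ _ Hsp) in HVn. injection HVn as <-.
    destruct sp as [m M]. apply nth_error_In, Hspecs in Hsp as [x [body Hm]].
    exists (DMeth x s m M body). split; [split; eauto|].
    eapply methrel_mono; [|apply Hdecls; eauto]. lia.
Qed.

Lemma vrel_iface_restrict j ti ui R S pi v W Ws d :
  wf_decls D -> In (DIface ti R) D -> In (DIface ui S) D -> length pi = length S ->
  (forall n a sp, nth_error pi n = Some a -> nth_error S n = Some sp ->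
                  nth_error R a = Some sp) ->
  vrel D sigma j (TI ti) v (conapp (KI ti) (W :: Ws)) ->
  vrel D sigma j (TI ui) v (conapp (KI ui) (W :: map (fun a => nth a Ws d) pi)).
Proof.
  intros [_ [Huniq _]] HR HS Hlpi Hpi HW.
  assert (Hsel : forall n a, nth_error pi n = Some a ->
            exists sp, nth_error S n = Some sp /\ nth_error R a = Some sp).
  { intros n a Ha. destruct (nth_error S n) as [sp|] eqn:Hsp.
    - exists sp. split; auto. eapply Hpi; eauto.
    - apply nth_error_None in Hsp.
      assert (n < length pi) by (apply nth_error_Some; congruence). lia. }
  apply vrel_unfold in HW.
  inversion HW as [|? ? us Vus Vms specs Hv HVus HVms Hspecs HlVms Hrecv Hmeths]; subst.
  match goal with Heq : conapp _ _ = conapp _ _ |- _ =>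
    apply conapp_inj in Heq as [_ [= <- <-]] end.
  assert (specs = R) as -> by eauto.
  assert (Hnth : forall n a, nth_error pi n = Some a -> nth_error Vms a = Some (nth a Vms d)).
  { intros n a Ha. destruct (Hsel n a Ha) as [sp [_ HRa]].
    apply nth_error_nth'. rewrite HlVms. apply nth_error_Some. congruence. }
  apply vrel_fold. eapply vs_iface with (specs := S); eauto.
  - apply Forall_forall. intros Vn HVn. apply in_map_iff in HVn as [a [<- Ha]].
    apply In_nth_error in Ha as [n Ha].
    rewrite Forall_forall in HVms. eapply HVms, nth_error_In, Hnth, Ha.
  - now rewrite length_map.
  - intros j2 n sp Vn Hj2 Hsp HVn. rewrite nth_error_map in HVn.
    destruct (nth_error pi n) as [a|] eqn:Ha; [injection HVn as <-|discriminate].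
    apply (Hmeths j2 a); eauto.
Qed.

Lemma coerce_lam t u E1 : coerce D t u E1 -> exists X B, E1 = TLam X B.
Proof. intros []; eauto. Qed.

Lemma vrel_coerce k j n t u E1 v W V :
  wf_decls D -> coerce D t u E1 -> decls_rel D sigma k -> j <= k ->
  vrel D sigma j t v W -> tsteps_le sigma n (TApp E1 W) V -> vrel D sigma j u v V.
Proof.
  intros Hwf Hco Hdecls Hj HvW HV.
  destruct Hco as [s i specs X Hi Hspecs|ti ui R S pi X Xs HR HS Hlpi Hpi_lt Hpi HlXs HXs];
    apply tsteps_le_beta_inv in HV as [HW HV].
  - rewrite tsubst_conapp in HV. simpl in HV. rewrite Nat.eqb_refl, map_map in HV.
    apply tsteps_le_tval in HV as ->.
    + now apply vrel_struct_iface with (k := k).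
    + apply conapp_tval. constructor; auto. apply Forall_map, Forall_forall. constructor.
  - simpl in HV. rewrite Nat.eqb_refl, tsubst_nil in HV. simpl in HV.
    apply tsteps_le_case_inv in HV as (K & Vs & xs & B & -> & HVs & Hcl & Hlen & HV); auto.
    destruct Hcl as [[= <- <- <-]|[]].
    destruct Vs as [|W0 Ws]; [discriminate|]. injection Hlen as Hlen.
    rewrite tsubst_conapp in HV. simpl in HV. rewrite Nat.eqb_refl, map_map in HV.
    assert (Hsel : forall a, In a pi -> a < length Ws).
    { intros a Ha. apply In_nth_error in Ha as [m Ha]. rewrite <- Hlen, HlXs. eauto. }
    rewrite (map_ext_in _ (fun a => nth a Ws W0) pi) in HV.
    2:{ intros a Ha. apply (tsubst_pattern_var X); auto. rewrite Hlen. auto. }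
    apply tsteps_le_tval in HV as ->.
    + apply (vrel_iface_restrict j ti ui R S); auto.
    + inversion HVs as [|? ? HW0 HWs]. apply conapp_tval. constructor; auto.
      apply Forall_map, Forall_forall. intros a Ha.
      rewrite Forall_forall in HWs. apply HWs, nth_In. auto.
Qed.

End LogicalRelation.

Theorem lemma2 (D : list decl) (sigma : msubst) (k : nat) (t u : ty)
  (e : fexp) (E1 E2 : texp) :
  wf_decls D ->
  coerce D t u E1 ->
  decls_rel D sigma k ->
  erel D sigma k t e E2 ->
  erel D sigma k u e (TApp E1 E2).
Proof.
  intros Hwf Hco Hdecls He k1 k2 v V Hk1 Hk2 Hk Hv HV.
  assert (HE2 : tval E2).
  { destruct (coerce_lam _ _ _ _ Hco) as [X [B ->]].
    now apply tsteps_le_beta_inv in HV as []. }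
  apply (vrel_coerce D sigma k _ k2 t u E1 v E2); auto; [lia|].
  apply vrel_mono with (j := k - k1); [lia|].
  now apply (erel_tval D sigma k t e).
Qed.
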